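(* Let $(Y,\rho_Y)$ be a complete separable metric space, $I$ a finite set, $X=Y\times I$, $\bar X=X\times[0,\infty)$. Let $\{\pi_{ij}\}_{i,j\in I}$ be a right stochastic matrix, $\{S_i\}_{i\in I}$ jointly continuous semiflows $S_i:[0,\infty)\times Y\to Y$, $J$ a stochastic kernel on $Y$, and $\lambda>0$. Define the stochastic kernel $\bar P$ on $\bar X$ by $$\bar P((y,i,s),\bar A)=\sum_{j\in I}\pi_{ij}\int_0^\infty\lambda e^{-\lambda t}\int_Y\mathbb{1}_{\bar A}(u,j,t+s)\,J(S_i(t,y),du)\,dt.$$ Fix $y^*\in Y$ and put $V(y,i)=\rho_Y(y,y^* )$. Assume: (S1') there exist $M\geq0$, $\zeta\geq0$ with $\max_{i\in I}\rho_Y(S_i(t,y^* ),y^* )\leq Mt^\zeta$ for all $t\geq0$; (S2') there exists $L>0$ with $\rho_Y(S_i(t,y_1),S_i(t,y_2))\leq L\rho_Y(y_1,y_2)$ for all $t\geq0$, $y_1,y_2\in Y$, $i\in I$; (J1') there exist $a>0$, $b\geq0$ with $\int_Y\rho_Y^2(u,y^* )\,J(y,du)\leq a\rho_Y^2(y,y^* )+b$ for all $y\in Y$; and $2aL^2<1$. Then there exist constants $\Gamma>0$ and $C\geq0$ such that for every $t_0\geq0$ and the function $U_{t_0}:\bar X\to[0,\infty)$, $U_{t_0}(x,t)=e^{-\lambda(t_0-t)}V^2(x)\mathbb{1}_{[0,t_0]}(t)$, we have $$\sum_{n=0}^\infty\bar P^nU_{t_0}(x,0)\leq e^{-\Gamma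 t_0}V^2(x)+C\quad\text{for all }x\in X.$$
   Context: A semiflow satisfies $S_i(s,S_i(t,y))=S_i(s+t,y)$ and $S_i(0,y)=y$. $\bar P^n$ denotes the $n$-th iterate of the kernel ($\bar P^0$ the identity), acting on nonnegative Borel $f$ by $\bar P^nf(\bar x)=\int f\,d\bar P^n(\bar x,\cdot)$. *)

From HB Require Import structures.
From mathcomp Require Import all_boot all_order all_algebra.
From mathcomp Require Import all_classical all_reals all_analysis.
Set Implicit Arguments. Unset Strict Implicit. Unset Printing Implicit Defensive.
Import Order.TTheory GRing.Theory Num.Theory.
Import numFieldNormedType.Exports.
Local Open Scope classical_set_scope.
Local Open Scope ring_scope.

Definition is_metric {R : realType} {Y : Type} (rho : Y -> Y -> R) : Prop :=
  (forall x y, rho x y = 0 <-> x = y) /\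
  (forall x y, rho x y = rho y x) /\
  (forall x y z, rho x z <= rho x y + rho y z).

Definition rho_open {R : realType} {Y : Type} (rho : Y -> Y -> R) (A : set Y) : Prop :=
  forall y, A y -> exists e : R, 0 < e /\ (forall z, rho y z < e -> A z).

Definition rho_cvg {R : realType} {Y : Type} (rho : Y -> Y -> R)
  (u : nat -> Y) (l : Y) : Prop :=
  (fun n => rho (u n) l) @ \oo --> (0 : R).

Definition rho_complete {R : realType} {Y : Type} (rho : Y -> Y -> R) : Prop :=
  forall u : nat -> Y,
    (forall e : R, 0 < e -> exists N, forall m n, (N <= m)%N -> (N <= n)%N -> rho (u m) (u n) < e) ->
    exists l, rho_cvg rho u l.

Definition rho_separable {R : realType} {Y : Type} (rho : Y -> Y -> R) : Prop :=
  exists D : set Y, countable D /\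
    (forall y (e : R), 0 < e -> exists z, D z /\ rho y z < e).

Definition rho_borel {R : realType} {d} {Y : measurableType d} (rho : Y -> Y -> R) : Prop :=
  forall A : set Y, measurable A <-> <<s rho_open rho >> A.

Definition semiflow {R : realType} {Y : Type} (S : R -> Y -> Y) : Prop :=
  (forall y, S 0 y = y) /\
  (forall s t y, 0 <= s -> 0 <= t -> S s (S t y) = S (s + t) y).

Definition jointly_continuous {R : realType} {Y : Type} (rho : Y -> Y -> R)
  (S : R -> Y -> Y) : Prop :=
  forall (t : nat -> R) (t0 : R) (y : nat -> Y) (y0 : Y),
    (forall n, 0 <= t n) -> 0 <= t0 ->
    t @ \oo --> t0 -> rho_cvg rho y y0 ->
    rho_cvg rho (fun n => S (t n) (y n)) (S t0 y0).

Definition right_stochastic {R : realType} {I : finType} (pi : I -> I -> R) : Prop :=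
  (forall i j, 0 <= pi i j) /\ (forall i, \sum_(j : I) pi i j = 1).

(* Xbar = Y * I * [0,oo), time coordinate represented in R (only times >= 0
   are ever reached from the points considered).
   Pbar f (y,i,s) = sum_j pi_ij int_0^oo lam e^{-lam t} int_Y f(u,j,t+s) J(S_i(t,y),du) dt *)
Definition Pbar {R : realType} {d} {Y : measurableType d} {I : finType}
  (pi : I -> I -> R) (S : I -> R -> Y -> Y) (J : R.-pker Y ~> Y) (lam : R)
  (f : Y * I * R -> \bar R) : Y * I * R -> \bar R :=
  fun x =>
    let y := x.1.1 in let i := x.1.2 in let s := x.2 in
    (\sum_(j : I) (pi i j)%:E *
       \int[@lebesgue_measure R]_(t in (`[0%R, +oo[%classic : set R))
          ((lam * expR (- (lam * t)))%:E *
             \int[J (S i t y)]_u f (u, j, (t + s)%R)))%E.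

Definition Pbar_n {R : realType} {d} {Y : measurableType d} {I : finType}
  (pi : I -> I -> R) (S : I -> R -> Y -> Y) (J : R.-pker Y ~> Y) (lam : R)
  (n : nat) (f : Y * I * R -> \bar R) : Y * I * R -> \bar R :=
  iter n (Pbar pi S J lam) f.

Definition U_t0 {R : realType} {Y : Type} {I : Type} (rho : Y -> Y -> R) (ystar : Y)
  (lam t0 : R) (x : Y * I * R) : \bar R :=
  ((expR (- (lam * (t0 - x.2))) * (rho x.1.1 ystar) ^+ 2 *
     \1_(`[0, t0]%classic : set R) x.2)%:E).

From HB Require Import structures.
From mathcomp Require Import all_boot all_order all_algebra.
From mathcomp Require Import all_classical all_reals all_analysis measurable_realfun.
From mathcomp Require Import ring lra.
Set Implicit Arguments.
Unset Strict Implicit.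
Unset Printing Implicit Defensive.
Import Order.TTheory GRing.Theory Num.Theory.
Import numFieldNormedType.Exports.
Local Open Scope classical_set_scope.
Local Open Scope ring_scope.

(** A Foster-Lyapunov argument.  Write [v = V^2].  Together with
   [t^zeta <= K0 e^(kappa t / 2)], conditions (S1'), (S2') and (J1') give the
   drift bound [int v dJ(S_i(t, y)) <= q v(y) + b + m e^(kappa t)] with
   [q = 2 a L^2 < 1].  For fixed [t0] let [W(y, i, s) = e^(-g (t0 - s)) (v(y) - K') + K]
   for [s <= t0] and [W = 0] afterwards, where [g = lam (1 - q) / 2].  Integrating
   the drift bound against the exponential holding time gives [U_t0 + Pbar W <= W].
   As [Pbar] is monotone and superadditive on nonnegative functions, the partial
   sums of [sum_n Pbar^n U_t0] stay below [W], and [W(y, i, 0) <= e^(-g t0) v(y) + K]. *)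

Section ereal_sup_add.
Local Open Scope ereal_scope.
Context {R : realType}.

Lemma ge_ereal_supDr (A : set (\bar R)) z c :
  (forall x, A x -> x + z <= c) -> ereal_sup A + z <= c.
Proof.
case: z => [z | | ] Ac; last by rewrite addeNy leNye.
- by rewrite -leeBrDr//; apply: ge_ereal_sup => x Ax; rewrite leeBrDr ?Ac.
- have [->|supNy] := eqVneq (ereal_sup A) -oo; first by rewrite addNye leNye.
  rewrite addey//; move: supNy; rewrite -ltNye => /ereal_sup_gt[x Ax xNy].
  by have := Ac x Ax; rewrite addey// gt_eqF.
Qed.

Lemma ge_ereal_supD (A B : set (\bar R)) c :
  (forall x y, A x -> B y -> x + y <= c) -> ereal_sup A + ereal_sup B <= c.
Proof.
move=> ABc; rewrite addeC; apply: ge_ereal_supDr => y By.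
by rewrite addeC; apply: ge_ereal_supDr => x Ax; exact: ABc.
Qed.

End ereal_sup_add.

(* The time integrand of [Pbar] need not be measurable.  For nonnegative
   functions the integral is the supremum over simple minorants, which is
   monotone and superadditive without any measurability. *)
Section nonmeasurable_ge0_integral.
Local Open Scope ereal_scope.
Context d (T : measurableType d) (R : realType) (mu : {measure set T -> \bar R}).
Import HBNNSimple.

Lemma ge0_integral_mono (D : set T) (f g : T -> \bar R) :
  (forall x, D x -> 0 <= f x) -> (forall x, D x -> f x <= g x) ->
  \int[mu]_(x in D) f x <= \int[mu]_(x in D) g x.
Proof.
move=> f0 fg; rewrite !(integral_mkcond D).
have g0 x : D x -> 0 <= g x by move=> Dx; exact: le_trans (f0 _ Dx) (fg _ Dx).
rewrite !ge0_integralTE; [|exact: erestrict_ge0..].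
apply: ereal_sup_le => _ [h hf <-]; exists h => // x.
exact: le_trans (hf x) (lee_restrict fg x).
Qed.

Lemma ge0_integral_superadd (D : set T) (f g : T -> \bar R) :
  (forall x, D x -> 0 <= f x) -> (forall x, D x -> 0 <= g x) ->
  \int[mu]_(x in D) f x + \int[mu]_(x in D) g x <= \int[mu]_(x in D) (f x + g x).
Proof.
move=> f0 g0; rewrite !(integral_mkcond D).
have fg0 x : D x -> 0 <= f x + g x by move=> Dx; rewrite adde_ge0 ?f0 ?g0.
rewrite !ge0_integralTE; [|exact: erestrict_ge0..].
apply: ge_ereal_supD => _ _ [h1 h1f <-] [h2 h2g <-].
apply: ereal_sup_ubound; exists (add_nnsfun h1 h2); last exact: sintegralD.
move=> x /=; rewrite EFinD (erestrictD D f g); exact: leeD.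
Qed.

Lemma integral_support_subset (D E : set T) (f : T -> \bar R) :
  E `<=` D -> (forall x, D x -> ~ E x -> f x = 0) ->
  \int[mu]_(x in D) f x = \int[mu]_(x in E) f x.
Proof.
move=> ED f0; rewrite !(integral_mkcond _ f); congr integral; apply/funext => x.
rewrite !patchE; have [Ex|Ex] := boolP (x \in E); have [Dx|Dx] := boolP (x \in D).
- by [].
- by move: Dx; rewrite mem_set//; apply: ED; exact: set_mem.
- by rewrite f0 //; [exact: set_mem | move=> /mem_set; exact/negP].
- by [].
Qed.

End nonmeasurable_ge0_integral.

Section superadditive_operator.
Local Open Scope ereal_scope.
Context {X : Type} {R : realType} (P : (X -> \bar R) -> X -> \bar R).
Hypothesis P_ge0 : forall f, (forall x, 0 <= f x) -> forall x, 0 <= P f x.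
Hypothesis P_mono : forall f g, (forall x, 0 <= f x) -> (forall x, f x <= g x) ->
  forall x, P f x <= P g x.
Hypothesis P_superadd : forall f g, (forall x, 0 <= f x) -> (forall x, 0 <= g x) ->
  forall x, P f x + P g x <= P (fun y => f y + g y) x.

Lemma iter_ge0 f : (forall x, 0 <= f x) -> forall n x, 0 <= iter n P f x.
Proof. by move=> f0; elim=> [|n IHn] x //=; exact: P_ge0. Qed.

Lemma superadd_sum (F : nat -> X -> \bar R) : (forall n x, 0 <= F n x) ->
  forall N x, \sum_(0 <= n < N) P (F n) x <= P (fun y => \sum_(0 <= n < N) F n y) x.
Proof.
move=> F0; elim=> [|N IHN] x.
  by rewrite big_geq//; apply: P_ge0 => y; rewrite big_geq.
under [X in _ <= P X x]funext do rewrite big_nat_recr//=.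
rewrite big_nat_recr//=; apply: le_trans (P_superadd _ _ x) => //.
- exact: leeD (IHN x) (lexx _).
- by move=> y; exact: sume_ge0.
Qed.

Lemma nneseries_iter_le (U W : X -> \bar R) :
  (forall x, 0 <= U x) -> (forall x, 0 <= W x) -> (forall x, U x + P W x <= W x) ->
  forall x, \sum_(0 <= n <oo) iter n P U x <= W x.
Proof.
move=> U0 W0 UPW.
have partial N x : \sum_(0 <= n < N) iter n P U x <= W x.
  elim: N x => [|N IHN] x; first by rewrite big_geq.
  rewrite big_nat_recl//=; apply: le_trans (UPW x); rewrite leeD2l//.
  apply: le_trans (@superadd_sum (fun n => iter n P U) (iter_ge0 U0) N x) _.
  apply: P_mono IHN x => y; apply: sume_ge0 => n _; exact: iter_ge0.
move=> x; apply: lime_le; first by apply: is_cvg_nneseries => n _ _; exact: iter_ge0.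
exact: nearW.
Qed.

End superadditive_operator.

Section Pbar_order.
Local Open Scope ereal_scope.
Context {R : realType} {d} {Y : measurableType d} {I : finType}.
Variables (pi : I -> I -> R) (S : I -> R -> Y -> Y) (J : R.-pker Y ~> Y) (lam : R).
Hypothesis pi_ge0 : forall i j, (0 <= pi i j)%R.
Hypothesis lam_ge0 : (0 <= lam)%R.

Let weight_ge0 t : 0 <= (lam * expR (- (lam * t)))%:E.
Proof. by rewrite lee_fin mulr_ge0 ?expR_ge0. Qed.

Let inner_ge0 (f : Y * I * R -> \bar R) : (forall z, 0 <= f z) -> forall j s y' t,
  0 <= (lam * expR (- (lam * t)))%:E * \int[J y']_u f (u, j, (t + s)%R).
Proof. by move=> f0 j s y' t; rewrite mule_ge0// integral_ge0. Qed.

Lemma Pbar_ge0 f : (forall z, 0 <= f z) -> forall z, 0 <= Pbar pi S J lam f z.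
Proof.
move=> f0 z; apply: sume_ge0 => j _.
by rewrite mule_ge0 ?lee_fin// integral_ge0// => t _; exact: inner_ge0.
Qed.

Lemma Pbar_mono f g : (forall z, 0 <= f z) -> (forall z, f z <= g z) ->
  forall z, Pbar pi S J lam f z <= Pbar pi S J lam g z.
Proof.
move=> f0 fg z; apply: lee_sum => j _; rewrite lee_wpmul2l ?lee_fin//.
apply: ge0_integral_mono => [t _|t _]; first exact: inner_ge0.
by rewrite lee_wpmul2l// ge0_integral_mono.
Qed.

Lemma Pbar_superadd f g : (forall z, 0 <= f z) -> (forall z, 0 <= g z) ->
  forall z, Pbar pi S J lam f z + Pbar pi S J lam g z <=
            Pbar pi S J lam (fun w => f w + g w) z.
Proof.
move=> f0 g0 z; rewrite /Pbar -big_split/=; apply: lee_sum => j _.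
rewrite -ge0_muleDr ?integral_ge0//; [|by move=> t _; exact: inner_ge0..].
rewrite lee_wpmul2l ?lee_fin//.
apply: le_trans (ge0_integral_superadd _ _ _) _; [by move=> t _; exact: inner_ge0..|].
apply: ge0_integral_mono => [t _|t _].
  by rewrite adde_ge0//; exact: inner_ge0.
rewrite -ge0_muleDr ?integral_ge0// lee_wpmul2l//.
by apply: ge0_integral_superadd.
Qed.

End Pbar_order.

Section exponential_pdf_itv0c.
Local Open Scope ereal_scope.
Context {R : realType}.
Notation mu := (@lebesgue_measure R).

Lemma exponential_pdf_expR (k t : R) : (0 <= t)%R ->
  exponential_pdf k t = (k * expR (- (k * t)))%R.
Proof. by move=> t0; rewrite exponential_pdfE// mulNr. Qed.

Lemma integral_exponential_pdf_itv0c (k r : R) : (0 <= r)%R ->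
  \int[mu]_(t in `[0%R, r]) (exponential_pdf k t)%:E = (1 - expR (- (k * r)))%:E.
Proof.
rewrite le_eqVlt => /predU1P[<-|r0].
  by rewrite set_itv1 integral_set1 mulr0 oppr0 expR0 subrr.
by have := exponential_prob_itv0c k r0; rewrite /exponential_prob mulNr EFinB.
Qed.

Lemma integral_exponential_pdfZ_itv0c (c k r : R) :
  (0 <= r)%R -> (0 <= k)%R -> (0 <= c)%R ->
  \int[mu]_(t in `[0%R, r]) (c * exponential_pdf k t)%:E = (c * (1 - expR (- (k * r))))%:E.
Proof.
move=> r0 k0 c0; under eq_integral do rewrite EFinM.
rewrite ge0_integralZl_EFin//.
- by rewrite integral_exponential_pdf_itv0c// EFinM.
- by move=> t _; rewrite lee_fin exponential_pdf_ge0.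
apply/measurable_EFinP; exact: measurable_funTS (measurable_exponential_pdf k).
Qed.

Lemma integral_exponential_mix_itv0c (r c1 c2 c3 k1 k2 k3 : R) :
  (0 <= r)%R -> (0 <= k1)%R -> (0 <= k2)%R -> (0 <= k3)%R ->
  (0 <= c1)%R -> (0 <= c2)%R -> (0 <= c3)%R ->
  \int[mu]_(t in `[0%R, r])
     (c1 * exponential_pdf k1 t + c2 * exponential_pdf k2 t + c3 * exponential_pdf k3 t)%:E
  = (c1 * (1 - expR (- (k1 * r))) + c2 * (1 - expR (- (k2 * r)))
     + c3 * (1 - expR (- (k3 * r))))%:E.
Proof.
move=> r0 k10 k20 k30 c10 c20 c30.
have mterm (c k : R) :
    measurable_fun (`[0%R, r] : set R) (EFin \o (fun t : R => c * exponential_pdf k t)%R).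
  apply/measurable_EFinP/measurable_funM => //.
  exact: measurable_funTS (measurable_exponential_pdf k).
have term0 (c k t : R) : (0 <= c)%R -> (0 <= k)%R -> 0 <= (c * exponential_pdf k t)%:E.
  by move=> c0 k0; rewrite lee_fin mulr_ge0// exponential_pdf_ge0.
have mterm2 : measurable_fun `[0%R, r]
    (EFin \o (fun t : R => c1 * exponential_pdf k1 t + c2 * exponential_pdf k2 t)%R).
  by apply/measurable_EFinP/measurable_funD; apply/measurable_EFinP; exact: mterm.
under eq_integral do rewrite EFinD.
rewrite ge0_integralD; [|by []|by move=> t _; rewrite lee_fin addr_ge0 -?lee_fin ?term0
  |exact: mterm2|by move=> t _; exact: term0|exact: mterm].
under eq_integral do rewrite EFinD.
rewrite ge0_integralD; [|by []|by move=> t _; exact: term0|exact: mterm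
  |by move=> t _; exact: term0|exact: mterm].
by rewrite !integral_exponential_pdfZ_itv0c// -!EFinD.
Qed.

End exponential_pdf_itv0c.

Lemma integral_affine_prob d (T : measurableType d) (R : realType)
    (mu : {measure set T -> \bar R}) (f : T -> R) (c k : R) :
  mu setT = 1%E -> measurable_fun setT f -> (forall x, 0 <= f x) -> 0 <= c -> 0 <= k ->
  (\int[mu]_x (c * f x + k)%:E = c%:E * \int[mu]_x (f x)%:E + k%:E)%E.
Proof.
move=> mu1 mf f0 c0 k0; under eq_integral do rewrite EFinD EFinM.
rewrite ge0_integralD//; [|by move=> x _; rewrite mule_ge0 ?lee_fin
  |by apply: measurable_funeM; exact/measurable_EFinP].
rewrite ge0_integralZl_EFin//; last 2 first.
- by move=> x _; rewrite lee_fin.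
- exact/measurable_EFinP.
by rewrite integral_cst// mu1 mule1.
Qed.

Section lyapunov_function.
Context {R : realType} {d} {Y : measurableType d} {I : finType}.
Variables (pi : I -> I -> R) (S : I -> R -> Y -> Y) (J : R.-pker Y ~> Y).
Variables (lam : R) (v : Y -> R) (q b m kappa g : R).
Hypothesis pi_stoch : right_stochastic pi.
Hypothesis lam_gt0 : 0 < lam.
Hypothesis v_ge0 : forall y, 0 <= v y.
Hypothesis mv : measurable_fun setT v.
Hypotheses (q_ge0 : 0 <= q) (b_ge0 : 0 <= b) (m_ge0 : 0 <= m).
Hypotheses (kappa_ge0 : 0 <= kappa) (g_gt0 : 0 < g).
Hypothesis qlam_le : q * lam <= lam - g.
Hypothesis kappa_lt : kappa < lam - g.
Hypothesis drift : forall i t y, 0 <= t ->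
  (\int[J (S i t y)]_u (v u)%:E <= (q * v y + b + m * expR (kappa * t))%:E)%E.

Let k1 := lam - g.
Let k2 := lam - g - kappa.
Let D := lam * b / k1 + lam * m / k2.
Let K := D * lam / g.
Let K' := D * k1 / g.

Let k1_gt0 : 0 < k1. Proof. exact: le_lt_trans kappa_ge0 kappa_lt. Qed.
Let k2_gt0 : 0 < k2. Proof. by rewrite /k2 subr_gt0. Qed.
Let D_ge0 : 0 <= D.
Proof.
by rewrite /D addr_ge0// divr_ge0 ?mulr_ge0 ?(ltW lam_gt0) ?(ltW k1_gt0) ?(ltW k2_gt0).
Qed.
Let K'_ge0 : 0 <= K'. Proof. by rewrite /K' divr_ge0 ?mulr_ge0 ?(ltW k1_gt0) ?(ltW g_gt0). Qed.
Let K_ge0 : 0 <= K. Proof. by rewrite /K divr_ge0 ?mulr_ge0 ?(ltW lam_gt0) ?(ltW g_gt0). Qed.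
(* [K - K' = D] absorbs the drift constants, and [lam * K' = k1 * K] makes the
   [K]-terms of [U + Pbar W] cancel against those of [W]. *)
Let KBK' : K - K' = D. Proof. by rewrite /K /K' /k1; field; rewrite gt_eqF. Qed.
Let lamK' : lam * K' = k1 * K. Proof. by rewrite /K /K'; field; rewrite gt_eqF. Qed.

Let discount_le1 t0 t : t <= t0 -> expR (- (g * (t0 - t))) <= 1.
Proof. by move=> tt0; rewrite expR_le1 oppr_le0 mulr_ge0 ?subr_ge0 ?(ltW g_gt0). Qed.

Let K_subK'_ge0 B : 0 <= B <= 1 -> 0 <= K - K' * B.
Proof.
case/andP=> B0 B1; rewrite subr_ge0 (le_trans (ler_piMr K'_ge0 B1))//.
by rewrite -subr_ge0 KBK'.
Qed.

Let W t0 (z : Y * I * R) : \bar R :=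
  (if z.2 <= t0 then expR (- (g * (t0 - z.2))) * (v z.1.1 - K') + K else 0)%:E.

Let W_ge0 t0 z : (0 <= W t0 z)%E.
Proof.
rewrite /W lee_fin; case: ifP => // /discount_le1 E1.
rewrite (_ : _ + K = expR (- (g * (t0 - z.2))) * v z.1.1
                     + (K - K' * expR (- (g * (t0 - z.2))))); last by ring.
by rewrite addr_ge0 ?mulr_ge0 ?expR_ge0// K_subK'_ge0// expR_ge0.
Qed.

Let integral_W (t0 : R) (j : I) (t' : R) (y' : Y) : t' <= t0 ->
  (\int[J y']_u W t0 (u, j, t') =
   (expR (- (g * (t0 - t'))))%:E * \int[J y']_u (v u)%:E
   + (K - K' * expR (- (g * (t0 - t'))))%:E)%E.
Proof.
move=> tt0; rewrite -integral_affine_prob ?prob_kernel ?expR_ge0//; last first.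
  by rewrite K_subK'_ge0// expR_ge0 discount_le1.
by apply: eq_integral => u _; rewrite /W /= tt0; congr EFin; ring.
Qed.

Let integrand_le (t0 : R) (i j : I) (y : Y) (s t : R) : 0 <= t -> t + s <= t0 ->
  ((lam * expR (- (lam * t)))%:E * \int[J (S i t y)]_u W t0 (u, j, (t + s)%R)
   + (K * expR (- (g * (t0 - s))) * exponential_pdf k1 t)%:E <=
  (expR (- (g * (t0 - s))) * (q * v y + b) * (lam / k1) * exponential_pdf k1 t
   + expR (- (g * (t0 - s))) * (lam * m / k2) * exponential_pdf k2 t
   + K * exponential_pdf lam t)%:E)%E.
Proof.
move=> t0' tst0; rewrite integral_W//.
set A := expR (- (g * (t0 - s))); set B := expR (- (g * (t0 - (t + s)))).
have BA : B = A * expR (g * t) by rewrite -expRD; congr expR; ring.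
apply: (@le_trans _ _ ((lam * expR (- (lam * t)) *
    (B * (q * v y + b + m * expR (kappa * t)) + (K - K' * B))
    + K * A * exponential_pdf k1 t)%:E)).
  rewrite [leRHS]EFinD leeD2r// [leRHS]EFinM.
  rewrite lee_wpmul2l ?lee_fin ?mulr_ge0 ?expR_ge0 ?(ltW lam_gt0)//.
  by rewrite [leRHS]EFinD leeD2r// [leRHS]EFinM lee_wpmul2l ?lee_fin ?expR_ge0// drift.
rewrite lee_fin !exponential_pdf_expR// le_eqVlt; apply/predU1P; left.
have ek1 : expR (- (k1 * t)) = expR (- (lam * t)) * expR (g * t).
  by rewrite -expRD /k1; congr expR; ring.
have ek2 : expR (- (k2 * t)) = expR (- (lam * t)) * expR (g * t) * expR (kappa * t).
  by rewrite -!expRD /k2; congr expR; ring.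
have K'E : K' = k1 * K / lam by rewrite -lamK'; field; rewrite gt_eqF.
rewrite ek1 ek2 BA K'E; field.
by rewrite !gt_eqF.
Qed.

Let PW_bound r P := expR (- (g * r)) * (q * P + b) * (lam / k1) * (1 - expR (- (k1 * r)))
  + expR (- (g * r)) * (lam * m / k2) * (1 - expR (- (k2 * r)))
  + K * (1 - expR (- (lam * r))) - K * expR (- (g * r)) * (1 - expR (- (k1 * r))).

Let time_integral_le (t0 : R) (i j : I) (y : Y) (s : R) : s <= t0 ->
  (\int[lebesgue_measure]_(t in `[0%R, +oo[)
     ((lam * expR (- (lam * t)))%:E * \int[J (S i t y)]_u W t0 (u, j, (t + s)%R))
   <= (PW_bound (t0 - s) (v y))%:E)%E.
Proof.
move=> st0; have r0 : 0 <= t0 - s by rewrite subr_ge0.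
set A := expR (- (g * (t0 - s))).
have F0 t :
    (0 <= (lam * expR (- (lam * t)))%:E * \int[J (S i t y)]_u W t0 (u, j, (t + s)%R))%E.
  by rewrite mule_ge0 ?integral_ge0 ?lee_fin ?mulr_ge0 ?expR_ge0 ?(ltW lam_gt0).
rewrite (@integral_support_subset _ _ _ lebesgue_measure _ `[0%R, t0 - s]); first last.
- move=> t; rewrite /= !in_itv/= andbT => t0' /negP; rewrite t0' /= -ltNge => tr.
  rewrite integral0_eq ?mule0// => u _; rewrite /W /= ifF//.
  by apply/negbTE; rewrite -ltNge -ltrBlDr.
- by move=> t /=; rewrite !in_itv/= => /andP[->].
have KA_ge0 : 0 <= K * A by rewrite mulr_ge0 ?expR_ge0.
have c1_ge0 : 0 <= A * (q * v y + b) * (lam / k1).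
  by rewrite !mulr_ge0 ?expR_ge0 ?addr_ge0 ?mulr_ge0 ?invr_ge0 ?(ltW lam_gt0) ?(ltW k1_gt0).
have c2_ge0 : 0 <= A * (lam * m / k2).
  by rewrite !mulr_ge0 ?expR_ge0 ?invr_ge0 ?(ltW lam_gt0) ?(ltW k2_gt0).
(* The negative part [- K' * B] of the integrand is moved to the left as a
   multiple of an exponential density, so that all integrands are nonnegative. *)
rewrite /PW_bound -/A EFinB leeBrDr//.
rewrite -(integral_exponential_pdfZ_itv0c r0 (ltW k1_gt0) KA_ge0).
apply: le_trans (ge0_integral_superadd _ _ _) _ => [t _ //|t _|].
  by rewrite lee_fin mulr_ge0 ?exponential_pdf_ge0 ?(ltW k1_gt0).
rewrite -(integral_exponential_mix_itv0c r0 (ltW k1_gt0) (ltW k2_gt0) (ltW lam_gt0)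
  c1_ge0 c2_ge0 K_ge0).
apply: ge0_integral_mono => [t _|t].
  by apply: adde_ge0; rewrite ?F0 // lee_fin mulr_ge0 ?exponential_pdf_ge0 ?(ltW k1_gt0).
by rewrite /= in_itv/= => /andP[t0' tr]; apply: integrand_le; rewrite // -lerBrDr.
Qed.

Let Pbar_W_le t0 y i s : s <= t0 ->
  (Pbar pi S J lam (W t0) (y, i, s) <= (PW_bound (t0 - s) (v y))%:E)%E.
Proof.
move=> st0; have [pi_ge0 pi1] := pi_stoch.
apply: (@le_trans _ _ (\sum_(j : I) (pi i j)%:E * (PW_bound (t0 - s) (v y))%:E)%E).
  by apply: lee_sum => j _; rewrite lee_wpmul2l ?lee_fin// time_integral_le.
by under eq_bigr do rewrite -EFinM; rewrite sumEFin -mulr_suml pi1 mul1r.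
Qed.

Let Pbar_W_eq0 t0 z : t0 < z.2 -> Pbar pi S J lam (W t0) z = 0%E.
Proof.
move: z => [[y i] s] /= t0s; apply: big1 => j _.
rewrite integral0_eq ?mule0// => t; rewrite /= in_itv/= andbT => t_ge0.
rewrite integral0_eq ?mule0// => u _; rewrite /W /= ifF//.
by apply/negbTE; rewrite -ltNge; apply: lt_le_trans t0s _; rewrite lerDr.
Qed.

Let balance r P : 0 <= r -> 0 <= P ->
  expR (- (lam * r)) * P + PW_bound r P <= expR (- (g * r)) * (P - K') + K.
Proof.
move=> r0 P0; rewrite /PW_bound.
set A := expR (- (g * r)); set E1 := expR (- (k1 * r)); set E2 := expR (- (k2 * r)).
have AE1 : expR (- (lam * r)) = A * E1 by rewrite -expRD /k1; congr expR; ring.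
have A0 : 0 <= A := expR_ge0 _.
have E1_01 : 0 <= E1 <= 1.
  by rewrite expR_ge0 expR_le1 oppr_le0 mulr_ge0 ?(ltW k1_gt0).
have E2_ge0 : 0 <= E2 := expR_ge0 _.
have theta_le1 : lam * q / k1 <= 1 by rewrite ler_pdivrMr// mul1r mulrC.
have theta_ge0 : 0 <= lam * q / k1 by rewrite divr_ge0 ?mulr_ge0 ?(ltW lam_gt0) ?(ltW k1_gt0).
have beta_ge0 : 0 <= lam * b / k1 by rewrite divr_ge0 ?mulr_ge0 ?(ltW lam_gt0) ?(ltW k1_gt0).
have mu_ge0 : 0 <= lam * m / k2 by rewrite divr_ge0 ?mulr_ge0 ?(ltW lam_gt0) ?(ltW k2_gt0).
have -> : A * (q * P + b) * (lam / k1) * (1 - E1) =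
  A * ((lam * q / k1) * P * (1 - E1) + (lam * b / k1) * (1 - E1)).
  by field; rewrite gt_eqF.
have K'E : K' = K - D by rewrite -KBK'; ring.
have inner : E1 * P + lam * q / k1 * P * (1 - E1) + lam * b / k1 * (1 - E1)
    + lam * m / k2 * (1 - E2) <= P + D.
  rewrite /D; case/andP: E1_01 => E1_ge0 E1_le1.
  have : lam * q / k1 * (P * (1 - E1)) <= P * (1 - E1).
    by rewrite ler_piMl// mulr_ge0// subr_ge0.
  nra.
have := ler_wpM2l A0 inner; rewrite AE1 K'E; lra.
Qed.

Let U t0 (z : Y * I * R) : \bar R :=
  (expR (- (lam * (t0 - z.2))) * v z.1.1 * \1_(`[0, t0]%classic : set R) z.2)%:E.

Let U_ge0 t0 z : (0 <= U t0 z)%E.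
Proof. by rewrite lee_fin !mulr_ge0 ?expR_ge0 ?indicE. Qed.

Let lyapunov_ineq t0 z : (U t0 z + Pbar pi S J lam (W t0) z <= W t0 z)%E.
Proof.
move: z => [[y i] s]; have [st0|t0s] := leP s t0; last first.
  rewrite Pbar_W_eq0// adde0 /U /W /= ifF; last by rewrite leNgt t0s.
  by rewrite indicE memNset ?mulr0//= in_itv/= (leNgt s) t0s andbF.
have U_le : (U t0 (y, i, s) <= (expR (- (lam * (t0 - s))) * v y)%:E)%E.
  by rewrite lee_fin ler_piMr ?mulr_ge0 ?expR_ge0// indicE; case: (_ \in _).
apply: le_trans (leeD U_le (Pbar_W_le y i st0)) _.
by rewrite -EFinD /W /= st0 lee_fin balance ?subr_ge0.
Qed.

Lemma Pbar_series_discounted_le : exists C : R, 0 <= C /\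
  forall t0, 0 <= t0 -> forall y i,
  (\sum_(0 <= n <oo) Pbar_n pi S J lam n
     (fun z => (expR (- (lam * (t0 - z.2))) * v z.1.1 *
                \1_(`[0, t0]%classic : set R) z.2)%:E) (y, i, 0%R)
   <= (expR (- (g * t0)) * v y + C)%:E)%E.
Proof.
have [pi_ge0 _] := pi_stoch.
exists K; split => // t0 t0_ge0 y i.
apply: le_trans (nneseries_iter_le _ _ _ (U_ge0 t0) (W_ge0 t0) (lyapunov_ineq t0) _) _.
- exact: Pbar_ge0 pi_ge0 (ltW lam_gt0).
- exact: Pbar_mono pi_ge0 (ltW lam_gt0).
- exact: Pbar_superadd pi_ge0 (ltW lam_gt0).
rewrite /W /= t0_ge0 subr0 lee_fin lerD2r ler_wpM2l ?expR_ge0//.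
by rewrite lerBlDr lerDl.
Qed.

End lyapunov_function.

Lemma powR_le_expR {R : realType} (z e : R) : 0 <= z -> 0 < e ->
  exists K0, forall t, 0 <= t -> t `^ z <= K0 * expR (e * t).
Proof.
move=> z_ge0 e_gt0; have [->|z_neq0] := eqVneq z 0.
  by exists 1 => t t_ge0; rewrite powRr0 mul1r -expR0 ler_expR mulr_ge0// ltW.
have z_gt0 : 0 < z by rewrite lt_neqAle eq_sym z_neq0.
exists ((z / e) `^ z) => t t_ge0.
have t_le : t <= z / e * expR (e / z * t).
  rewrite {1}(_ : t = z / e * (e / z * t)); last by field; rewrite !gt_eqF.
  by rewrite ler_wpM2l ?divr_ge0 ?ltW//; have := expR_ge1Dx (e / z * t); lra.
have zeK_ge0 : 0 <= z / e by rewrite divr_ge0 ?ltW.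
apply: le_trans (ge0_ler_powR z_ge0 _ _ t_le) _;
  rewrite ?nnegrE ?(mulr_ge0 zeK_ge0) ?expR_ge0//.
by rewrite powRM ?expR_ge0// -expRM mulrAC divfK ?gt_eqF.
Qed.

Lemma metric_ge0 {R : realType} {Y : Type} (rho : Y -> Y -> R) :
  is_metric rho -> forall x y, 0 <= rho x y.
Proof.
move=> [rho0 [rhoC rho_tri]] x y.
have := rho_tri x y x; rewrite (proj2 (rho0 x x) erefl) (rhoC y x) -mulr2n.
by rewrite pmulrn_lge0.
Qed.

Lemma measurable_metric {R : realType} {d} {Y : measurableType d}
    (rho : Y -> Y -> R) (y0 : Y) :
  is_metric rho -> rho_borel rho -> measurable_fun setT (rho ^~ y0).
Proof.
move=> [_ [_ rho_tri]] borel.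
apply: (measurability _ (RGenOInfty.measurableE R)) => //.
move=> /= _ [_ [x ->] <-]; apply: measurableI => //.
apply/borel; apply: sub_sigma_algebra => u /=; rewrite in_itv/= andbT => xu.
exists (rho u y0 - x); split=> [|w uw]; first by rewrite subr_gt0.
by rewrite /= in_itv/= andbT; have := rho_tri u w y0; lra.
Qed.

Lemma semiflow_drift {R : realType} {d} {Y : measurableType d} {I : finType}
    (rho : Y -> Y -> R) (S : I -> R -> Y -> Y) (J : R.-pker Y ~> Y) (ystar : Y)
    (M zeta L a b K0 kappa : R) :
  is_metric rho -> 0 <= M -> 0 <= a ->
  (forall t, 0 <= t -> \big[Num.max/0]_(i : I) rho (S i t ystar) ystar <= M * t `^ zeta) ->
  (forall t y1 y2 i, 0 <= t -> rho (S i t y1) (S i t y2) <= L * rho y1 y2) ->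
  (forall y, (\int[J y]_u ((rho u ystar) ^+ 2)%:E <= (a * (rho y ystar) ^+ 2 + b)%:E)%E) ->
  (forall t, 0 <= t -> t `^ zeta <= K0 * expR (kappa / 2 * t)) ->
  forall i t y, 0 <= t ->
  (\int[J (S i t y)]_u ((rho u ystar) ^+ 2)%:E <=
   (2 * a * L ^+ 2 * rho y ystar ^+ 2 + b
    + 2 * a * M ^+ 2 * K0 ^+ 2 * expR (kappa * t))%:E)%E.
Proof.
move=> rho_metric M_ge0 a_ge0 hS1 hS2 hJ powR_le i t y t_ge0.
apply: le_trans (hJ _) _; rewrite lee_fin.
set u := L * rho y ystar; set w := M * (K0 * expR (kappa / 2 * t)).
have dist_le : rho (S i t y) ystar <= u + w.
  have [_ [_ rho_tri]] := rho_metric.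
  apply: le_trans (rho_tri _ (S i t ystar) _) _; apply: lerD; first exact: hS2.
  apply: le_trans (le_bigmax _ (fun j => rho (S j t ystar) ystar) i) _.
  by apply: le_trans (hS1 _ t_ge0) _; rewrite ler_wpM2l ?powR_le.
have dist_ge0 := metric_ge0 rho_metric (S i t y) ystar.
have sq_le : rho (S i t y) ystar ^+ 2 <= 2 * u ^+ 2 + 2 * w ^+ 2.
  have : (u - w) ^+ 2 >= 0 := sqr_ge0 _.
  have : rho (S i t y) ystar ^+ 2 <= (u + w) ^+ 2.
    by rewrite ler_pXn2r ?nnegrE// (le_trans dist_ge0).
  nra.
have -> : expR (kappa * t) = expR (kappa / 2 * t) ^+ 2.
  by rewrite -expRM_natl; congr expR; field.
by have := ler_wpM2l a_ge0 sq_le; rewrite /u /w; lra.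
Qed.

Theorem lemma5p1 (R : realType) (d : measure_display) (Y : measurableType d)
  (rho : Y -> Y -> R) (I : finType) (pi : I -> I -> R) (S : I -> R -> Y -> Y)
  (J : R.-pker Y ~> Y) (lam : R) (ystar : Y)
  (M zeta L a b : R) :
  is_metric rho -> rho_complete rho -> rho_separable rho -> rho_borel rho ->
  right_stochastic pi ->
  (forall i, semiflow (S i)) -> (forall i, jointly_continuous rho (S i)) ->
  0 < lam ->
  (* (S1') *)
  0 <= M -> 0 <= zeta ->
  (forall t, 0 <= t -> \big[Num.max/0]_(i : I) rho (S i t ystar) ystar <= M * t `^ zeta) ->
  (* (S2') *)
  0 < L ->
  (forall t y1 y2 i, 0 <= t -> rho (S i t y1) (S i t y2) <= L * rho y1 y2) ->
  (* (J1') *)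
  0 < a -> 0 <= b ->
  (forall y, (\int[J y]_u ((rho u ystar) ^+ 2)%:E <= (a * (rho y ystar) ^+ 2 + b)%:E)%E) ->
  2 * a * L ^+ 2 < 1 ->
  exists Gamma C : R, 0 < Gamma /\ 0 <= C /\
    forall t0 : R, 0 <= t0 -> forall (y : Y) (i : I),
      (\sum_(0 <= n <oo) Pbar_n pi S J lam n (U_t0 rho ystar lam t0) (y, i, 0%R)
         <= (expR (- (Gamma * t0)) * (rho y ystar) ^+ 2 + C)%:E)%E.
Proof.
move=> rho_metric _ _ borel pi_stoch _ _ lam_gt0 M_ge0 zeta_ge0 hS1 _ hS2 a_gt0 b_ge0
  hJ contract.
set q := 2 * a * L ^+ 2; set g := lam * (1 - q) / 2; set kappa := lam / 4.
have q_lt1 : q < 1 := contract.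
have a2_ge0 : 0 <= 2 * a by rewrite mulr_ge0// ltW.
have q_ge0 : 0 <= q by rewrite mulr_ge0 ?sqr_ge0.
have g_gt0 : 0 < g by rewrite divr_gt0// mulr_gt0// subr_gt0.
have half_kappa_gt0 : 0 < kappa / 2 by rewrite !divr_gt0.
have [K0 powR_le] := powR_le_expR zeta_ge0 half_kappa_gt0.
have drift := semiflow_drift rho_metric M_ge0 (ltW a_gt0) hS1 hS2 hJ powR_le.
have m_ge0 : 0 <= 2 * a * M ^+ 2 * K0 ^+ 2.
  by apply: mulr_ge0; [apply: mulr_ge0|]; rewrite ?sqr_ge0.
have kappa_ge0 : 0 <= kappa by rewrite divr_ge0// ltW.
have qlam_le : q * lam <= lam - g by rewrite /g; nra.
have kappa_lt : kappa < lam - g by rewrite /g /kappa; nra.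
have [C [C_ge0 series_le]] := Pbar_series_discounted_le pi_stoch lam_gt0
  (fun y => sqr_ge0 (rho y ystar))
  (measurable_funX 2 (measurable_metric ystar rho_metric borel))
  q_ge0 b_ge0 m_ge0 kappa_ge0 g_gt0 qlam_le kappa_lt drift.
by exists g, C.
Qed.
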